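(* Fix $h\in\{2,\dots,H\}$. If $x_1,x_2\in\mathcal{X}_{h-1}$ are kinematically inseparable, then $f^\star(x_1,a,x')=f^\star(x_2,a,x')$ for all $x'\in\mathcal{X}_h$ and $a\in\mathcal{A}$. Analogously, if $x_1',x_2'\in\mathcal{X}_h$ are kinematically inseparable, then $f^\star(x,a,x_1')=f^\star(x,a,x_2')$ for all $x\in\mathcal{X}_{h-1}$ and $a\in\mathcal{A}$.
   Context: Block MDP: horizon $H$; finite latent states $\mathcal{S}=\sqcup_h\mathcal{S}_h$; countable observations $\mathcal{X}=\sqcup_h\mathcal{X}_h$; finite actions $\mathcal{A}$; start distribution $\mu$; transitions $T(\cdot\mid s,a)\in\Delta(\mathcal{S}_{h+1})$; emissions $q(\cdot\mid s)\in\Delta(\mathcal{X}_h)$ with disjoint supports, decoder $g^\star$; observation transitions $T(x'\mid x,a)=q(x'\mid g^\star(x'))T(g^\star(x')\mid g^\star(x),a)$. $\Psi_{h-1}$ is a finite set of policies forming an $\alpha$-policy cover of $\mathcal{S}_{h-1}$. $\rho_h\in\Delta(\mathcal{X}_h)$ is the law of $x_h$ when a policy chosen uniformly from $\Psi_{h-1}$ is followed to $x_{h-1}$ and then a uniformly random action is taken; $f^\star(x,a,x')=\frac{T(x'\mid x,a)}{T(x'\mid x,a)+\rho_h(x')}$ (equivalently $\frac{T(g^\star(x')\mid g^\star(x),a)}{T(g^\star(x')\mid g^\star(x),a)+\rho_h(g^\star(x'))}$), the Bayes optimal predictor for distinguishing real from imposter transitions. KI: for full-support $u\in\Delta(\mathcal{X}\times\mathcal{A})$,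 $\mathbb{P}_u(x,a\mid x')=\frac{T(x'\mid x,a)u(x,a)}{\sum_{\tilde x,\tilde a}T(x'\mid\tilde x,\tilde a)u(\tilde x,\tilde a)}$; $x_1',x_2'$ are backward KI if $\mathbb{P}_u(\cdot\mid x_1')=\mathbb{P}_u(\cdot\mid x_2')$ for every such $u$; $x_1,x_2$ are forward KI if $T(\cdot\mid x_1,a)=T(\cdot\mid x_2,a)$ for all $a$; kinematically inseparable means both. *)

From HB Require Import structures.
From mathcomp Require Import all_boot all_order all_algebra.
From mathcomp Require Import boolp classical_sets reals constructive_ereal ereal esum.
Set Implicit Arguments. Unset Strict Implicit. Unset Printing Implicit Defensive.
Import Order.TTheory GRing.Theory Num.Theory.
Local Open Scope ring_scope.
Local Open Scope classical_set_scope.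

Section BlockMDP.
Variables (R : realType) (S : finType) (X : countType) (A : finType).

Definition sumX (f : X -> R) : R := fine (\esum_(x in [set: X]) (f x)%:E).

(* Block MDP with horizon H: layered latent states (levS s \in [1,H]),
   layered observations (levX x \in [1,H]), start distribution mu on S_1,
   transitions T s a in Delta(S_{h+1}) (for levS s = h < H; T s a is
   supported on layer h+1 in general, hence zero at layer H),
   emissions q s in Delta(X_h) with pairwise disjoint supports, and a
   decoder g mapping every emitted observation to its (unique) latent state. *)
Definition is_block_mdp (H : nat) (levS : S -> nat) (levX : X -> nat)
  (mu : S -> R) (T : S -> A -> S -> R) (q : S -> X -> R) (g : X -> S) : Prop :=
  [/\ (forall s, (1 <= levS s <= H)%N) /\ (forall x, (1 <= levX x <= H)%N),
      [/\ (forall s, 0 <= mu s), \sum_(s : S) mu s = 1 &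
          (forall s, 0 < mu s -> levS s = 1%N)],
      [/\ (forall s a s', 0 <= T s a s'),
          (forall s a s', 0 < T s a s' -> levS s' = (levS s).+1) &
          (forall s a, (levS s < H)%N -> \sum_(s' : S) T s a s' = 1)],
      [/\ (forall s x, 0 <= q s x), (forall s, sumX (q s) = 1) &
          (forall s x, 0 < q s x -> levX x = levS s)] &
      [/\ (forall s1 s2 x, 0 < q s1 x -> 0 < q s2 x -> s1 = s2) &
          (forall x s, 0 < q s x -> g x = s)]].

Variables (mu : S -> R) (T : S -> A -> S -> R) (q : S -> X -> R) (g : X -> S).

Definition Tobs (x : X) (a : A) (x' : X) : R := q (g x') x' * T (g x) a (g x').

Definition is_policy (pi : X -> A -> R) : Prop :=
  (forall x a, 0 <= pi x a) /\ (forall x, \sum_(a : A) pi x a = 1).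

(* law of the latent state s_{n+1} when following pi from the start *)
Fixpoint slaw_aux (pi : X -> A -> R) (n : nat) (s' : S) : R :=
  match n with
  | 0 => mu s'
  | n'.+1 => \sum_(s : S) slaw_aux pi n' s *
               sumX (fun x => q s x * \sum_(a : A) pi x a * T s a s')
  end.

(* P_pi(s_t = s), for layers t >= 1 *)
Definition slaw (pi : X -> A -> R) (t : nat) (s : S) : R := slaw_aux pi t.-1 s.

Definition xlaw (pi : X -> A -> R) (t : nat) (x : X) : R :=
  \sum_(s : S) slaw pi t s * q s x.

Definition eta (t : nat) (s : S) : R :=
  sup [set slaw pi t s | pi in is_policy].

Definition policy_cover (t : nat) (levS : S -> nat) (alpha : R)
  (I : finType) (psi : I -> X -> A -> R) : Prop :=
  [/\ (0 < #|I|)%N, injective psi, (forall i, is_policy (psi i)) &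
      forall s, levS s = t ->
        \big[Num.max/0]_(i : I) slaw (psi i) t s >= alpha * eta t s].

(* rho_h: law of x_h when a uniformly chosen policy of Psi_{h-1} is followed
   to x_{h-1}, then a uniformly random action is taken. *)
Definition rho (h : nat) (I : finType) (psi : I -> X -> A -> R) (x' : X) : R :=
  #|I|%:R^-1 * \sum_(i : I)
     sumX (fun x => xlaw (psi i) h.-1 x *
                    \sum_(a : A) #|A|%:R^-1 * Tobs x a x').

Definition fstar (h : nat) (I : finType) (psi : I -> X -> A -> R)
  (x : X) (a : A) (x' : X) : R :=
  Tobs x a x' / (Tobs x a x' + rho h psi x').

Definition full_support_dist (u : X -> A -> R) : Prop :=
  (forall x a, 0 < u x a) /\ sumX (fun x => \sum_(a : A) u x a) = 1.

Definition Pu (u : X -> A -> R) (x : X) (a : A) (x' : X) : R :=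
  Tobs x a x' * u x a / sumX (fun y => \sum_(b : A) Tobs y b x' * u y b).

Definition backward_KI (x1' x2' : X) : Prop :=
  forall u, full_support_dist u -> forall x a, Pu u x a x1' = Pu u x a x2'.

Definition forward_KI (x1 x2 : X) : Prop :=
  forall a x', Tobs x1 a x' = Tobs x2 a x'.

Definition kin_insep (x1 x2 : X) : Prop := backward_KI x1 x2 /\ forward_KI x1 x2.

End BlockMDP.

(** The forward half is immediate: f^star(x, a, x') depends on x only through
    the transition kernel T(. | x, a).  For the backward half, apply backward
    kinematic inseparability to one full-support distribution u on X x A (one
    exists because X is countable): cancelling u(x, a) in P_u(x, a | x'_1) =
    P_u(x, a | x'_2) shows that T(x'_1 | ., .) = k T(x'_2 | ., .) for a single
    constant k > 0.  Since rho_h is linear in the transition kernel,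
    rho_h(x'_1) = k rho_h(x'_2) as well, and k cancels in
    f^star = T / (T + rho_h). *)

From HB Require Import structures.
From mathcomp Require Import all_boot all_order all_algebra.
From mathcomp Require Import boolp classical_sets reals constructive_ereal ereal esum.
From mathcomp Require Import fsbigop cardinality sequences.
Import Order.TTheory GRing.Theory Num.Theory.
Local Open Scope ring_scope.
Local Open Scope classical_set_scope.

Lemma esum_half_geometric (R : realType) :
  (\esum_(k in [set: nat]) ((1 / (2 ^ (k + 1))%:R : R)%:E) = 1%:E)%E.
Proof.
rewrite -nneseries_esumT => [|n]; last by rewrite lee_fin divr_ge0.
have := @cvg_geometric_eseries_half R 1 0.
by rewrite expr0 divr1 => /cvg_lim <-.
Qed.

Section SumX.
Context {R : realType} {X : countType}.
Implicit Types (f g : X -> R) (x : X).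

Lemma sumX_ge0 f : (forall x, 0 <= f x) -> 0 <= sumX f.
Proof. by move=> f0; apply/fine_ge0/esum_ge0 => x _; rewrite lee_fin. Qed.

(* [fine] sends an infinite sum to 0, so a nonzero [sumX] is a genuine sum. *)
Lemma esum_fin_num_of_sumX f :
  sumX f != 0 -> (\esum_(x in [set: X]) (f x)%:E \is a fin_num)%E.
Proof. by rewrite /sumX; case: (\esum_(x in _) _)%E; rewrite ?eqxx. Qed.

Lemma ler_sumX_term f g x : (forall y, 0 <= f y <= g y) ->
  (\esum_(y in [set: X]) (g y)%:E \is a fin_num)%E -> f x <= sumX f.
Proof.
move=> fg gfin; have f0 y : 0 <= f y by case/andP: (fg y).
have efin : (\esum_(y in [set: X]) (f y)%:E \is a fin_num)%E.
  rewrite ge0_fin_numE ?esum_ge0 // => [|y _]; last by rewrite lee_fin.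
  apply: le_lt_trans (_ : _ <= \esum_(y in _) (g y)%:E)%E _.
    by apply: le_esum => y _; rewrite lee_fin; case/andP: (fg y).
  by rewrite ltey_eq gfin.
rewrite -lee_fin /sumX fineK //; apply: esum_ge.
by exists [set x]; [split; [exact: finite_set1 | by []] | rewrite fsbig_set1].
Qed.

Lemma sumXZ (c : R) f : 0 <= c -> (forall x, 0 <= f x) ->
  sumX (fun x => c * f x) = c * sumX f.
Proof.
rewrite le_eqVlt => /orP[/eqP <- _|c_gt0 f0].
  by rewrite mul0r /sumX esum1 // => x _; rewrite mul0r.
have esumZ : (\esum_(x in [set: X]) (c * f x)%:E =
              c%:E * \esum_(x in [set: X]) (f x)%:E)%E.
  rewrite /esum -ereal_sup_pZl //; congr ereal_sup; apply/seteqP.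
  have fsumZ F : (\sum_(i \in F) (c * f i)%:E = c%:E * \sum_(i \in F) (f i)%:E)%E.
    rewrite ge0_mule_fsumr => [|i]; last by rewrite lee_fin.
    by apply: eq_fsbigr => i _; rewrite EFinM.
  split=> y [F FF <-].
    by exists (\sum_(i \in F) (f i)%:E)%E; [exists F | rewrite fsumZ].
  by case: FF => G GF <-; exists G; rewrite ?fsumZ.
rewrite /sumX esumZ; case: (\esum_(x in _) _)%E => [r| |] //=.
- by rewrite real_mulry ?gtr0_real // gtr0_sg // mul1e /= mulr0.
- by rewrite real_mulrNy ?gtr0_real // gtr0_sg // mul1e /= mulr0.
Qed.

Lemma positive_sumX1_exists (x0 : X) :
  exists w : X -> R, (forall x, 0 < w x) /\ sumX w = 1.
Proof.
pose v (k : nat) : R := 1 / (2 ^ (k + 1))%:R.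
have v_gt0 k : 0 < v k by rewrite divr_gt0 // ltr0n expn_gt0.
pose w x := v (pickle x).
have w_ge0 x : 0 <= w x := ltW (v_gt0 _).
have wfin : (\esum_(x in [set: X]) (w x)%:E \is a fin_num)%E.
  rewrite ge0_fin_numE ?esum_ge0 // => [|x _]; last by rewrite lee_fin.
  rewrite -(esum_image _ _ (fun j => (v j)%:E)) => [|x y _ _].
    2: exact: (pcan_inj (@pickleK X)).
  rewrite esum_mkcond; apply: le_lt_trans (_ : _ <= \esum_(j in [set: nat]) (v j)%:E)%E _.
    by apply: le_esum => j _; case: ifP => _; rewrite // lee_fin ltW.
  by rewrite esum_half_geometric ltry.
have Z_gt0 : 0 < sumX w.
  apply: lt_le_trans (v_gt0 (pickle x0)) (ler_sumX_term w w x0 _ wfin) => y.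
  by rewrite lexx w_ge0.
exists (fun x => (sumX w)^-1 * w x); split => [x|].
  by rewrite mulr_gt0 ?invr_gt0 ?v_gt0.
by rewrite sumXZ ?invr_ge0 ?ltW // mulVf ?gt_eqF.
Qed.

Lemma full_support_dist_exists {A : finType} (x0 : X) (a0 : A) :
  exists u : X -> A -> R, full_support_dist u.
Proof.
have [w [w_gt0 w1]] := positive_sumX1_exists x0.
have A_gt0 : (0 < #|A|%:R :> R) by rewrite ltr0n; apply/card_gt0P; exists a0.
exists (fun x _ => w x / #|A|%:R); split => [x a|]; first by rewrite divr_gt0.
suff -> : (fun x => \sum_(a : A) w x / #|A|%:R) = w by [].
apply: funext => x; rewrite sumr_const -[#|xpredT|]/#|A|.
by rewrite -(mulr_natr (w x / _)) divfK ?gt_eqF.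
Qed.

End SumX.

Section BlockMDP.
Context {R : realType} {S : finType} {X : countType} {A : finType}
  {H : nat} {levS : S -> nat} {levX : X -> nat}
  {mu : S -> R} {T : S -> A -> S -> R} {q : S -> X -> R} {g : X -> S}.
Hypothesis hM : is_block_mdp H levS levX mu T q g.

Lemma q_ge0 s x : 0 <= q s x.
Proof. by case: hM => _ _ _ [q0 _ _] _. Qed.

Lemma T_ge0 s a s' : 0 <= T s a s'.
Proof. by case: hM => _ _ [T0 _ _] _ _. Qed.

Lemma q_le1 s x : q s x <= 1.
Proof.
case: hM => _ _ _ [_ q1 _] _; rewrite -(q1 s).
apply: (ler_sumX_term _ (q s)) => [y|]; first by rewrite lexx q_ge0.
by apply: esum_fin_num_of_sumX; rewrite q1 oner_eq0.
Qed.

Lemma T_le1 s a s' : T s a s' <= 1.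
Proof.
case: hM => [[levS_le _] _ [_ T_lev T1] _ _].
have [s_lt|s_ge] := ltnP (levS s) H.
  rewrite -(T1 s a s_lt) (bigD1 s') //= lerDl.
  by apply: sumr_ge0 => s'' _; apply: T_ge0.
suff -> : T s a s' = 0 by [].
apply/eqP; rewrite eq_le T_ge0 andbT leNgt; apply/negP => /T_lev lev_s'.
by move: (levS_le s'); rewrite lev_s' => /andP[_]; rewrite ltnNge s_ge.
Qed.

Lemma Tobs_ge0 x a x' : 0 <= Tobs T q g x a x'.
Proof. by rewrite mulr_ge0 ?q_ge0 ?T_ge0. Qed.

Lemma Tobs_le1 x a x' : Tobs T q g x a x' <= 1.
Proof. by rewrite -(mulr1 1) ler_pM ?q_ge0 ?T_ge0 ?q_le1 ?T_le1. Qed.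

Lemma slaw_aux_ge0 pi n s : is_policy pi -> 0 <= slaw_aux mu T q pi n s.
Proof.
case: hM => _ [mu0 _ _] _ _ _ [pi0 _]; elim: n s => [|n IH] s //=.
apply: sumr_ge0 => s0 _; rewrite mulr_ge0 ?IH ?sumX_ge0 // => x.
by rewrite mulr_ge0 ?q_ge0 ?sumr_ge0 // => a _; rewrite mulr_ge0 ?T_ge0.
Qed.

Lemma xlaw_ge0 pi t x : is_policy pi -> 0 <= xlaw mu T q pi t x.
Proof.
by move=> pol; apply: sumr_ge0 => s _; rewrite mulr_ge0 ?q_ge0 ?slaw_aux_ge0.
Qed.

Lemma rho_scale h {I : finType} {psi : I -> X -> A -> R} {x1' x2'} {k : R} :
  (forall i, is_policy (psi i)) -> 0 <= k ->
  (forall x a, Tobs T q g x a x1' = k * Tobs T q g x a x2') ->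
  rho mu T q g h psi x1' = k * rho mu T q g h psi x2'.
Proof.
move=> pol k_ge0 Tk; rewrite /rho mulrCA; congr (_ * _); rewrite mulr_sumr.
apply: eq_bigr => i _; rewrite -sumXZ // => [|x]; last first.
  rewrite mulr_ge0 ?xlaw_ge0 ?sumr_ge0 // => a _.
  by rewrite mulr_ge0 ?invr_ge0 ?Tobs_ge0.
congr sumX; apply: funext => x; rewrite mulrCA; congr (_ * _); rewrite mulr_sumr.
by apply: eq_bigr => a _; rewrite Tk mulrCA.
Qed.

(* [fstar] is homogeneous of degree 0 in (T(x' | ., .), rho_h(x')). *)
Lemma fstar_eq_of_Tobs_proportional h {I : finType} {psi : I -> X -> A -> R}
    {x1' x2'} {k : R} :
  (forall i, is_policy (psi i)) -> 0 < k ->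
  (forall x a, Tobs T q g x a x1' = k * Tobs T q g x a x2') ->
  forall x a, fstar mu T q g h psi x a x1' = fstar mu T q g h psi x a x2'.
Proof.
move=> pol k_gt0 Tk x a; rewrite /fstar Tk (rho_scale h pol (ltW k_gt0) Tk).
by rewrite -mulrDr invfM mulrACA divff ?mul1r ?gt_eqF.
Qed.

Lemma Tobs_eq0_of_Pu_denom_eq0 {u : X -> A -> R} {x'} : full_support_dist u ->
  sumX (fun y => \sum_(b : A) Tobs T q g y b x' * u y b) = 0 ->
  forall x a, Tobs T q g x a x' = 0.
Proof.
move=> [u_gt0 u1] D0 x a; have Tu_ge0 y b : 0 <= Tobs T q g y b x' * u y b.
  by rewrite mulr_ge0 ?Tobs_ge0 ?ltW.
have : Tobs T q g x a x' * u x a <= 0.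
  (* Tobs <= 1 dominates the denominator by the total mass of u, so it is a
     genuine (finite) sum and bounds each of its terms. *)
  rewrite -D0; apply: le_trans (ler_sumX_term _ (fun y => \sum_(b : A) u y b) x _ _).
  - by rewrite (bigD1 a) //= lerDl sumr_ge0.
  - move=> y; rewrite sumr_ge0 //=; apply: ler_sum => b _.
    by apply: ler_piMl; [exact: ltW | exact: Tobs_le1].
  - by apply: esum_fin_num_of_sumX; rewrite u1 oner_eq0.
by rewrite pmulr_lle0 // => T_le0; apply/eqP; rewrite eq_le T_le0 Tobs_ge0.
Qed.

Lemma backward_KI_proportional (x0 : X) (a0 : A) {x1' x2'} :
  backward_KI T q g x1' x2' ->
  exists2 k : R, 0 < k & forall x a, Tobs T q g x a x1' = k * Tobs T q g x a x2'.
Proof.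
move=> bKI; have [u u_full] := @full_support_dist_exists R X A x0 a0.
pose D x' := sumX (fun y => \sum_(b : A) Tobs T q g y b x' * u y b).
have D_ge0 x' : 0 <= D x'.
  apply: sumX_ge0 => y; apply: sumr_ge0 => b _.
  by rewrite mulr_ge0 ?Tobs_ge0 ?ltW ?u_full.1.
have Pu_eq x a : Tobs T q g x a x1' / D x1' = Tobs T q g x a x2' / D x2'.
  have := bKI u u_full x a.
  rewrite /Pu (mulrAC (Tobs T q g x a x1')) (mulrAC (Tobs T q g x a x2')).
  by move/(mulIf (lt0r_neq0 (u_full.1 x a))).
have vanish x' : D x' = 0 -> forall x a, Tobs T q g x a x' = 0.
  exact: Tobs_eq0_of_Pu_denom_eq0.
have [D1_0|D1_neq0] := eqVneq (D x1') 0.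
  exists 1 => // x a; rewrite mul1r (vanish _ D1_0).
  have := Pu_eq x a; rewrite (vanish _ D1_0) mul0r => /esym/eqP.
  by rewrite mulf_eq0 invr_eq0 => /orP[/eqP -> | /eqP /vanish ->].
have [D2_0|D2_neq0] := eqVneq (D x2') 0.
  exists 1 => // x a; rewrite mul1r (vanish _ D2_0).
  have := Pu_eq x a; rewrite (vanish _ D2_0) mul0r => /eqP.
  by rewrite mulf_eq0 invr_eq0 => /orP[/eqP -> | /eqP /vanish ->].
exists (D x1' / D x2'); first by rewrite divr_gt0 // lt0r ?D1_neq0 ?D2_neq0 ?D_ge0.
by move=> x a; rewrite mulrAC -mulrA -Pu_eq mulrC divfK.
Qed.

End BlockMDP.

Theorem mainTheorem11 (R : realType) (S : finType) (X : countType) (A : finType)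
  (H : nat) (levS : S -> nat) (levX : X -> nat)
  (mu : S -> R) (T : S -> A -> S -> R) (q : S -> X -> R) (g : X -> S)
  (hM : is_block_mdp H levS levX mu T q g)
  (h : nat) (hh : (2 <= h <= H)%N)
  (alpha : R) (I : finType) (psi : I -> X -> A -> R)
  (hcover : policy_cover mu T q h.-1 levS alpha psi) :
  (forall x1 x2 : X, levX x1 = h.-1 -> levX x2 = h.-1 ->
     kin_insep T q g x1 x2 ->
     forall (a : A) (x' : X), levX x' = h ->
       fstar mu T q g h psi x1 a x' = fstar mu T q g h psi x2 a x') /\
  (forall x1' x2' : X, levX x1' = h -> levX x2' = h ->
     kin_insep T q g x1' x2' ->
     forall (x : X) (a : A), levX x = h.-1 ->
       fstar mu T q g h psi x a x1' = fstar mu T q g h psi x a x2').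
Proof.
split=> [x1 x2 _ _ [_ fKI] a x' _ | x1' x2' _ _ [bKI _] x a _].
  by rewrite /fstar fKI.
have [_ _ psi_pol _] := hcover.
have [k k_gt0 Tk] := backward_KI_proportional hM x a bKI.
by rewrite (fstar_eq_of_Tobs_proportional hM h psi_pol k_gt0 Tk).
Qed.
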